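(* Let $A_1A_2A_3$ and $B_1B_2B_3$ be triangles in the real projective plane that are perspective from a point $S$, i.e. the three lines $A_1B_1$, $A_2B_2$, $A_3B_3$ pass through $S$. For every permutation $(i,j,k)$ of $(1,2,3)$ let $P_{ij}$ be the intersection point of the lines $A_iA_k$ and $B_jB_k$, and let $C_k$ be the intersection point of the lines $P_{ik}P_{ki}$ and $P_{jk}P_{kj}$. (The configuration is assumed to be in general position, so that all these points and lines are well defined.) Then the triangle $C_1C_2C_3$ is perspective from the point $S$ to the triangle $A_1A_2A_3$ and to the triangle $B_1B_2B_3$; that is, for each $k\in\{1,2,3\}$ the points $S$, $A_k$, $B_k$, $C_k$ are collinear.
   Context: Two configurations with a correspondence between their points are said to be perspective from a point $O$ if all lines joining corresponding points pass through $O$. *)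

From HB Require Import structures.
From mathcomp Require Import all_boot all_order all_algebra.
From mathcomp Require Import reals.
Set Implicit Arguments. Unset Strict Implicit. Unset Printing Implicit Defensive.
Import Order.TTheory GRing.Theory Num.Theory.
Local Open Scope ring_scope.

(* Real projective plane via homogeneous coordinates: a point (or a line) is a
   nonzero vector of R^3, taken up to a nonzero scalar. *)
Definition vec3 (R : Type) := (R * R * R)%type.

Section Proj.
Variable R : nzRingType.

Definition v0 : vec3 R := (0, 0, 0).
Definition dot (p q : vec3 R) : R :=
  let: (p1, p2, p3) := p in let: (q1, q2, q3) := q in p1 * q1 + p2 * q2 + p3 * q3.
Definition cross (p q : vec3 R) : vec3 R :=
  let: (p1, p2, p3) := p in let: (q1, q2, q3) := q in
  (p2 * q3 - p3 * q2, p3 * q1 - p1 * q3, p1 * q2 - p2 * q1).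

Definition proj_pt (p : vec3 R) : Prop := p != v0.
Definition distinct (p q : vec3 R) : Prop := cross p q != v0.
Definition join (p q : vec3 R) : vec3 R := cross p q.
Definition meet (l m : vec3 R) : vec3 R := cross l m.
Definition incident (p l : vec3 R) : Prop := dot p l = 0.
Definition collinear (ps : seq (vec3 R)) : Prop :=
  exists l : vec3 R, l != v0 /\ forall p, p \in ps -> incident p l.

(* the third index k of a permutation (i,j,k) of (0,1,2) *)
Definition third (i j : 'I_3) : 'I_3 := inord (3 - i - j).

Definition Ppt (A B : 'I_3 -> vec3 R) (i j : 'I_3) : vec3 R :=
  meet (join (A i) (A (third i j))) (join (B j) (B (third i j))).

Definition Cpt (A B : 'I_3 -> vec3 R) (k : 'I_3) : vec3 R :=
  let i : 'I_3 := inord ((k + 1) %% 3) in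
  let j : 'I_3 := inord ((k + 2) %% 3) in
  meet (join (Ppt A B i k) (Ppt A B k i)) (join (Ppt A B j k) (Ppt A B k j)).

Definition triangle (A : 'I_3 -> vec3 R) : Prop :=
  (forall i, proj_pt (A i)) /\ ~ collinear [:: A 0; A 1; A 2].

End Proj.

From HB Require Import structures.
From mathcomp Require Import all_boot all_order all_algebra.
From mathcomp Require Import reals.
From mathcomp Require Import ring.
Set Implicit Arguments. Unset Strict Implicit.
Import Order.TTheory GRing.Theory Num.Theory.
Local Open Scope ring_scope.

(* Write [p q r] for the triple product det(p, q, r).  The line P_ik P_ki
   evaluates at A_k and at B_k to products of three brackets, so by the
   Binet-Cauchy identity the incidence of C_k with the line A_k B_k factors as
   a product of brackets times det(A_i x B_i, A_j x B_j, A_k x B_k), the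
   determinant of the three lines A_i B_i.  These lines all pass through S, so
   this last determinant vanishes. *)

Definition det3 (R : nzRingType) (p q r : vec3 R) : R := dot (cross p q) r.

Section Identities.
Context {R : comNzRingType}.
Implicit Types a b c d l p q r s t ai aj ak bi bj bk : vec3 R.

Local Ltac coords := repeat match goal with
  | v : vec3 _ |- _ => let x := fresh "x" in let y := fresh "y" in
      let z := fresh "z" in move: v => [[x y] z] end;
  rewrite /det3 /join /meet /dot /cross /=.

Lemma incident_joinl p q : incident p (join p q).
Proof. rewrite /incident; coords; ring. Qed.

Lemma incident_joinr p q : incident q (join p q).
Proof. rewrite /incident; coords; ring. Qed.

Lemma det3_swapl p q r : det3 q p r = - det3 p q r.
Proof. coords; ring. Qed.

Lemma det3_swapr p q r : det3 p r q = - det3 p q r.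
Proof. coords; ring. Qed.

Lemma dot_cross_cross a b c d :
  dot (cross a b) (cross c d) = dot a c * dot b d - dot a d * dot b c.
Proof. coords; ring. Qed.

Lemma det3_mul_dot l1 l2 l3 s t :
  det3 l1 l2 l3 * dot s t =
  dot s l1 * det3 l2 l3 t + dot s l2 * det3 l3 l1 t + dot s l3 * det3 l1 l2 t.
Proof. coords; ring. Qed.

Lemma dot_Pline_A ai aj ak bi bj bk :
  dot (join (meet (join ai aj) (join bk bj)) (meet (join ak aj) (join bi bj))) ak
  = det3 ak bi bj * det3 aj bj bk * det3 ai aj ak.
Proof. coords; ring. Qed.

Lemma dot_Pline_B ai aj ak bi bj bk :
  dot (join (meet (join ai aj) (join bk bj)) (meet (join ak aj) (join bi bj))) bk
  = det3 ai aj bk * det3 ak aj bj * det3 bi bj bk.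
Proof. coords; ring. Qed.

Lemma det3_joins ai aj ak bi bj bk :
  det3 (join ai bi) (join aj bj) (join ak bk)
  = det3 aj bj bk * det3 ak ai bi - det3 ak aj bj * det3 ai bi bk.
Proof. coords; ring. Qed.

Lemma dot_C_join ai aj ak bi bj bk :
  dot (meet (join (meet (join ai aj) (join bk bj)) (meet (join ak aj) (join bi bj)))
            (join (meet (join aj ai) (join bk bi)) (meet (join ak ai) (join bj bi))))
      (join ak bk)
  = det3 ak bi bj * det3 ai aj ak * det3 ai aj bk * det3 bi bj bk *
    det3 (join ai bi) (join aj bj) (join ak bk).
Proof.
rewrite [meet _ _]/meet [join ak bk]/join dot_cross_cross.
rewrite !dot_Pline_A !dot_Pline_B det3_joins.
rewrite !(det3_swapl ai aj) !(det3_swapl bi bj) (det3_swapr ak bi bj).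
ring.
Qed.

Lemma dot_nondegenerate p : p != v0 R -> exists t, dot p t != 0.
Proof.
case: p => [[x y] z] p_neq0; rewrite /dot.
have [x0|] := eqVneq x 0; last by exists (1, 0, 0); rewrite !mulr1 !mulr0 !addr0.
have [y0|] := eqVneq y 0; last by exists (0, 1, 0); rewrite !mulr1 !mulr0 add0r addr0.
have [z0|] := eqVneq z 0; last by exists (0, 0, 1); rewrite !mulr1 !mulr0 !add0r.
by move: p_neq0; rewrite x0 y0 z0 eqxx.
Qed.

End Identities.

Section Concurrence.
Context {R : idomainType}.

Lemma det3_concurrent (s l1 l2 l3 : vec3 R) :
  s != v0 R -> incident s l1 -> incident s l2 -> incident s l3 -> det3 l1 l2 l3 = 0.
Proof.
move=> /dot_nondegenerate [t st_neq0] s1 s2 s3.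
have := det3_mul_dot l1 l2 l3 s t.
rewrite s1 s2 s3 !mul0r !addr0 => /eqP.
by rewrite mulf_eq0 (negbTE st_neq0) orbF => /eqP.
Qed.

Lemma C_incident_join (s ai aj ak bi bj bk : vec3 R) :
  s != v0 R ->
  incident s (join ai bi) -> incident s (join aj bj) -> incident s (join ak bk) ->
  incident
    (meet (join (meet (join ai aj) (join bk bj)) (meet (join ak aj) (join bi bj)))
          (join (meet (join aj ai) (join bk bi)) (meet (join ak ai) (join bj bi))))
    (join ak bk).
Proof.
move=> s_neq0 si sj sk.
by rewrite /incident dot_C_join (det3_concurrent s_neq0 si sj sk) mulr0.
Qed.

End Concurrence.

Lemma third_perm (i j k : 'I_3) : i != j -> j != k -> i != k -> third i j = k.
Proof.
by case: i j k => [[|[|[|?]]] ?] [[|[|[|?]]] ?] [[|[|[|?]]] ?] //= *;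
  apply: val_inj; rewrite /= inordK.
Qed.

Lemma Cpt_indices (k : 'I_3) :
  let i : 'I_3 := inord ((k + 1) %% 3) in
  let j : 'I_3 := inord ((k + 2) %% 3) in
  [/\ i != j, j != k & i != k].
Proof.
by case: k => [[|[|[|?]]] ?] //=; rewrite -!val_eqE /= !inordK.
Qed.

Lemma Cpt_incident_join (R : idomainType) (S : vec3 R) (A B : 'I_3 -> vec3 R) :
  S != v0 R -> (forall i, incident S (join (A i) (B i))) ->
  forall k, incident (Cpt A B k) (join (A k) (B k)).
Proof.
move=> S_neq0 SAB k; rewrite /Cpt.
set i : 'I_3 := inord _; set j : 'I_3 := inord _.
have [ij jk ik] : [/\ i != j, j != k & i != k] := Cpt_indices k.
have [ji kj ki] : [/\ j != i, k != j & k != i] by rewrite !(eq_sym k) eq_sym.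
rewrite /Ppt (third_perm ik kj ij) (third_perm ki ij kj).
rewrite (third_perm jk ki ji) (third_perm kj ji ki).
exact: C_incident_join S_neq0 (SAB i) (SAB j) (SAB k).
Qed.

Theorem theorem1 (R : realType) (S : vec3 R) (A B : 'I_3 -> vec3 R) :
  proj_pt S ->
  triangle A -> triangle B ->
  (* perspective from S: the lines A_i B_i are defined and pass through S *)
  (forall i, distinct (A i) (B i)) ->
  (forall i, incident S (join (A i) (B i))) ->
  (* general position: every P_ij is well defined *)
  (forall i j : 'I_3, i != j ->
     distinct (join (A i) (A (third i j))) (join (B j) (B (third i j)))) ->
  (* general position: the lines P_ik P_ki are well defined *)
  (forall i k : 'I_3, i != k -> distinct (Ppt A B i k) (Ppt A B k i)) ->
  (* general position: every C_k is well defined *)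
  (forall i j k : 'I_3, i != j -> j != k -> i != k ->
     distinct (join (Ppt A B i k) (Ppt A B k i)) (join (Ppt A B j k) (Ppt A B k j))) ->
  forall k : 'I_3, collinear [:: S; A k; B k; Cpt A B k].
Proof.
move=> S_neq0 _ _ AB_neq SAB _ _ _ k.
exists (join (A k) (B k)); split; first exact: AB_neq.
move=> p; rewrite !inE => /or4P [] /eqP ->.
- exact: SAB.
- exact: incident_joinl.
- exact: incident_joinr.
- exact: Cpt_incident_join S_neq0 SAB k.
Qed.
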